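(* Let $A$ be a commutative ring and $\sigma$ a hereditary torsion theory on $A$-modules such that $A$ is $\sigma$-artinian. Then $\mathcal{K}(\sigma)$ is a finite set.
   Context: $\mathcal{L}(\sigma)$ is the Gabriel filter of $\sigma$. $A$ is $\sigma$-artinian if for every descending chain of ideals $\mathfrak{a}_1\supseteq\mathfrak{a}_2\supseteq\cdots$ there is an index $m$ such that for every $s\ge m$ the module $\mathfrak{a}_m/\mathfrak{a}_s$ is $\sigma$-torsion (i.e. for each $x\in\mathfrak{a}_m$ there is $\mathfrak{h}\in\mathcal{L}(\sigma)$ with $x\mathfrak{h}\subseteq\mathfrak{a}_s$). $\mathcal{K}(\sigma)$ is the set of prime ideals $\mathfrak{p}$ of $A$ with $\mathfrak{p}\notin\mathcal{L}(\sigma)$. *)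

From mathcomp Require Import all_boot all_algebra.
Set Implicit Arguments. Unset Strict Implicit. Unset Printing Implicit Defensive.
Import GRing.Theory.
Local Open Scope ring_scope.

Definition is_ideal (A : comPzRingType) (I : A -> Prop) : Prop :=
  [/\ I 0, (forall x y, I x -> I y -> I (x + y)) & (forall a x, I x -> I (a * x))].

Definition is_prime_ideal (A : comPzRingType) (p : A -> Prop) : Prop :=
  [/\ is_ideal p, ~ p 1 & (forall a b, p (a * b) -> p a \/ p b)].

Definition colon_ideal (A : comPzRingType) (I : A -> Prop) (a : A) : A -> Prop :=
  fun x => I (x * a).

(* Gabriel filter (Gabriel topology) of ideals, axioms T1-T4 of Stenstrom,
   Rings of Quotients, VI.5.  Hereditary torsion theories on A-Mod are in
   bijection with Gabriel filters; sigma is represented by L(sigma). *)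
Definition gabriel_filter (A : comPzRingType) (L : (A -> Prop) -> Prop) : Prop :=
  [/\ (forall I, L I -> is_ideal I),
      L (fun _ => True) /\
      (forall I J, L I -> is_ideal J -> (forall x, I x -> J x) -> L J),
      (forall I J, L I -> L J -> L (fun x => I x /\ J x)),
      (forall I a, L I -> L (colon_ideal I a)) &
      (forall I J, L I -> is_ideal J -> (forall a, I a -> L (colon_ideal J a)) -> L J)].

Definition sigma_artinian (A : comPzRingType) (L : (A -> Prop) -> Prop) : Prop :=
  forall a : nat -> A -> Prop,
    (forall n, is_ideal (a n)) ->
    (forall n x, a n.+1 x -> a n x) ->
    exists m, forall s, (m <= s)%N -> forall x, a m x ->
      exists2 h, L h & forall y, h y -> a s (x * y).

Definition K_sigma (A : comPzRingType) (L : (A -> Prop) -> Prop) (p : A -> Prop) : Prop :=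
  is_prime_ideal p /\ ~ L p.

Definition finite_family (A : Type) (S : (A -> Prop) -> Prop) : Prop :=
  exists (n : nat) (f : nat -> A -> Prop), forall p, S p ->
    exists i, (i < n)%N /\ (forall x, p x <-> f i x).

From mathcomp Require Import all_boot all_algebra.
From Stdlib Require Import Classical ClassicalEpsilon.

(* Let L be the Gabriel filter of sigma.  The proof has three ingredients.
   (1) A prime q outside L is sigma-torsion-free: if x h is contained in q
       for some h in L, then x lies in q (otherwise h would be contained in q,
       forcing q into L).
   (2) K(sigma) is an antichain: if p is contained in q, both in K(sigma), and
       x lies in q but not in p, the descending chain p + x^n A stabilises up
       to sigma-torsion; this yields an h in L contained in q, a contradiction.
   (3) Any sequence g_0, g_1, ... in K(sigma) repeats: the chain of finite
       intersections g_0 /\ ... /\ g_(n-1) stabilises at some m, so by (1)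
       that intersection lies in g_m, by prime avoidance some g_i (i < m) lies
       in g_m, and by (2) g_i = g_m.
   If K(sigma) were infinite, dependent choice would produce a sequence of
   pairwise distinct members of K(sigma), contradicting (3). *)

Set Implicit Arguments.
Unset Strict Implicit.
Unset Printing Implicit Defensive.

Import GRing.Theory.
Local Open Scope ring_scope.

Lemma dependent_choice_seq (T : Type) (P : seq T -> T -> Prop) :
  (forall l, exists x, P l x) ->
  exists g : nat -> T, forall n, P [seq g i | i <- iota 0 n] (g n).
Proof.
move=> extend.
pose pick l := proj1_sig (constructive_indefinite_description _ (extend l)).
have pickP l : P l (pick l).
  exact: proj2_sig (constructive_indefinite_description _ (extend l)).
pose fix prefix n := if n is k.+1 then rcons (prefix k) (pick (prefix k)) else [::].
exists (fun n => pick (prefix n)) => n.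
suff -> : [seq pick (prefix i) | i <- iota 0 n] = prefix n by [].
elim: n => // n IH.
by rewrite -{1}addn1 iotaD map_cat IH add0n /= cats1.
Qed.

Lemma infinite_family_distinct_seq (T : Type) (S : (T -> Prop) -> Prop) :
  ~ finite_family S ->
  exists g : nat -> T -> Prop, (forall n, S (g n)) /\
    forall i n, (i < n)%N -> ~ (forall x, g n x <-> g i x).
Proof.
move=> infS.
pose nth_pred (l : seq (T -> Prop)) := nth (fun _ => False) l.
have fresh l : exists p, S p /\
    forall i, (i < size l)%N -> ~ (forall x, p x <-> nth_pred l i x).
  apply: NNPP => no_fresh; apply: infS; exists (size l), (nth_pred l) => p Sp.
  apply: NNPP => far; apply: no_fresh; exists p; split=> // i il eq_p.
  by apply: far; exists i.
have [g gP] := @dependent_choice_seq _ _ fresh.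
exists g; split=> [n | i n lt_in]; first exact: (gP n).1.
have := (gP n).2 i; rewrite /nth_pred size_map size_iota (nth_map 0%N) ?size_iota //.
by rewrite nth_iota //; apply.
Qed.

Section Ideals.
Variable A : comPzRingType.
Implicit Types (I P : A -> Prop) (x y : A).

Lemma ideal0 I : is_ideal I -> I 0.
Proof. by case. Qed.

Lemma idealD I x y : is_ideal I -> I x -> I y -> I (x + y).
Proof. by case=> _ addI _; apply: addI. Qed.

Lemma idealMl I a x : is_ideal I -> I x -> I (a * x).
Proof. by case=> _ _ mulI; apply: mulI. Qed.

Lemma idealMr I x a : is_ideal I -> I x -> I (x * a).
Proof. by rewrite mulrC; apply: idealMl. Qed.

Lemma prime_ideal_pow P x n : is_prime_ideal P -> P (x ^+ n) -> P x.
Proof.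
case=> _ P1 primeP; elim: n => [|n IH]; first by rewrite expr0.
by rewrite exprS => /primeP [].
Qed.

Definition ideal_add_mul I x : A -> Prop := fun z => exists r, I (z - x * r).

Lemma is_ideal_add_mul I x : is_ideal I -> is_ideal (ideal_add_mul I x).
Proof.
move=> idI; split.
- by exists 0; rewrite mulr0 subr0; apply: ideal0.
- move=> z1 z2 [r1 I1] [r2 I2]; exists (r1 + r2).
  by rewrite mulrDr opprD addrACA; apply: idealD.
- move=> a z [r Ir]; exists (a * r).
  by rewrite mulrCA -mulrBr; apply: idealMl.
Qed.

Lemma ideal_add_mul_gen I x : is_ideal I -> ideal_add_mul I x x.
Proof. by move=> idI; exists 1; rewrite mulr1 subrr; apply: ideal0. Qed.

Lemma ideal_add_mul_pow_decr I x n z :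
  ideal_add_mul I (x ^+ n.+1) z -> ideal_add_mul I (x ^+ n) z.
Proof. by case=> r Ir; exists (x * r); rewrite mulrA -exprSr. Qed.

Definition meet_below (g : nat -> A -> Prop) (n : nat) : A -> Prop :=
  fun x => forall i, (i < n)%N -> g i x.

Lemma is_ideal_meet_below g n : (forall i, is_ideal (g i)) -> is_ideal (meet_below g n).
Proof.
move=> idg; split.
- by move=> i _; apply: ideal0.
- by move=> x y gx gy i lt_in; apply: idealD (idg i) (gx i lt_in) (gy i lt_in).
- by move=> a x gx i lt_in; apply: idealMl (idg i) (gx i lt_in).
Qed.

Lemma meet_below_decr g n x : meet_below g n.+1 x -> meet_below g n x.
Proof. by move=> gx i lt_in; apply/gx/ltnW. Qed.

Lemma prime_avoidance P g n :
  is_prime_ideal P -> (forall i, is_ideal (g i)) ->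
  (forall x, meet_below g n x -> P x) ->
  exists2 i, (i < n)%N & forall x, g i x -> P x.
Proof.
move=> primeP idg; elim: n => [|n IH] meet_sub.
  by case: primeP => _ P1 _; case: P1; apply: meet_sub.
have [gn_sub | gn_not_sub] := classic (forall x, g n x -> P x).
  by exists n.
have [y [gn_y nPy]] : exists y, g n y /\ ~ P y.
  apply: NNPP => H; apply: gn_not_sub => y gy.
  by apply: NNPP => nPy; apply: H; exists y.
have [i lt_in gi_sub] : exists2 i, (i < n)%N & forall x, g i x -> P x.
  apply: IH => x gx.
  have : P (x * y).
    apply: meet_sub => i; rewrite ltnS leq_eqVlt => /predU1P [-> | lt_in].
      exact: idealMl (idg n) gn_y.
    exact: idealMr (idg i) (gx i lt_in).
  by case: primeP => _ _ prime_mul /prime_mul [] // /nPy.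
by exists i => //; apply: ltnW.
Qed.

End Ideals.

Section SigmaArtinian.
Variables (A : comPzRingType) (L : (A -> Prop) -> Prop).
Hypothesis gabL : gabriel_filter L.

Lemma gabriel_up h q : L h -> is_ideal q -> (forall y, h y -> q y) -> L q.
Proof. by case: gabL => _ [_ up] _ _ _; apply: up. Qed.

Lemma K_sigma_torsion_free q h x :
  K_sigma L q -> L h -> (forall y, h y -> q (x * y)) -> q x.
Proof.
move=> [[idq _ primeq] nLq] Lh xh_sub; apply: NNPP => nqx; apply: nLq.
by apply: (gabriel_up Lh idq) => y /xh_sub /primeq [].
Qed.

Hypothesis artL : sigma_artinian L.

Lemma K_sigma_antichain p q : K_sigma L p -> K_sigma L q ->
  (forall x, p x -> q x) -> forall x, q x -> p x.
Proof.
move=> [primep _] [[idq _ _] nLq] p_sub x qx; apply: NNPP => npx.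
have idp : is_ideal p by case: primep.
have [m stable] := artL (fun n => is_ideal_add_mul (x ^+ n) idp)
                        (@ideal_add_mul_pow_decr _ p x).
have [h Lh xh_sub] := stable m.+1 (leqnSn m) _ (ideal_add_mul_gen (x ^+ m) idp).
apply: nLq; apply: (gabriel_up Lh idq) => y /xh_sub [r pr].
have : p (x ^+ m * (y - x * r)) by rewrite mulrBr mulrA -exprSr.
case: (primep) => _ _ prime_mul.
case/prime_mul => [/(prime_ideal_pow primep) // | /p_sub qyr].
by rewrite -(subrK (x * r) y); apply: idealD idq qyr (idealMr r idq qx).
Qed.

Lemma K_sigma_seq_repeats (g : nat -> A -> Prop) : (forall n, K_sigma L (g n)) ->
  exists i m, (i < m)%N /\ forall x, g m x <-> g i x.
Proof.
move=> Kg; have idg n : is_ideal (g n) by case: (Kg n) => [[]].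
have [m stable] := artL (fun n => is_ideal_meet_below n idg) (@meet_below_decr _ g).
have meet_sub x : meet_below g m x -> g m x.
  move=> gx; have [h Lh xh_sub] := stable m.+1 (leqnSn m) x gx.
  by apply: (K_sigma_torsion_free (Kg m) Lh) => y /xh_sub; apply.
have [i lt_im gi_sub] := prime_avoidance (Kg m).1 idg meet_sub.
exists i, m; split=> // x; split; last exact: gi_sub.
exact: (K_sigma_antichain (Kg i) (Kg m) gi_sub).
Qed.

End SigmaArtinian.

Theorem mainTheorem16 (A : comPzRingType) (L : (A -> Prop) -> Prop) :
  gabriel_filter L -> sigma_artinian L -> finite_family (K_sigma L).
Proof.
move=> gabL artL; apply: NNPP => infK.
have [g [Kg distinct]] := infinite_family_distinct_seq infK.
have [i [m [lt_im eq_im]]] := K_sigma_seq_repeats gabL artL Kg.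
exact: distinct i m lt_im eq_im.
Qed.
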